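(* Let $R$ be a ring with identity and involution $*$, and let $a,b\in R$ be core invertible with core inverses $a^{\oplus}$ and $b^{\oplus}$. If $ab=0$ and $a^*b=0$, then $a+b$ is core invertible and $$(a+b)^{\oplus} = b^{\pi}a^{\oplus} + b^{\oplus},$$ where $b^{\pi}=1-b^{\oplus}b$.
   Context: An involution on $R$ satisfies $(a^* )^*=a$, $(ab)^*=b^*a^*$, $(a+b)^*=a^*+b^*$. An element $x\in R$ is a core inverse of $a$ if $axa=a$, $xR=aR$ and $Rx=Ra^*$; it is unique when it exists and is denoted $a^{\oplus}$. *)

From mathcomp Require Import all_boot all_algebra.
Set Implicit Arguments. Unset Strict Implicit. Unset Printing Implicit Defensive.
Import GRing.Theory.
Local Open Scope ring_scope.

Definition involution (R : pzRingType) (star : R -> R) : Prop :=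
  [/\ forall a, star (star a) = a,
      forall a b, star (a * b) = star b * star a &
      forall a b, star (a + b) = star a + star b].

Definition same_right_ideal (R : pzRingType) (x y : R) : Prop :=
  (exists u, x = y * u) /\ (exists v, y = x * v).

Definition same_left_ideal (R : pzRingType) (x y : R) : Prop :=
  (exists u, x = u * y) /\ (exists v, y = v * x).

Definition is_core_inverse (R : pzRingType) (star : R -> R) (a x : R) : Prop :=
  [/\ a * x * a = a, same_right_ideal x a & same_left_ideal x (star a)].

Definition core_invertible (R : pzRingType) (star : R -> R) (a : R) : Prop :=
  exists x, is_core_inverse star a x.

(* Core inverses are characterised by five equations: x is the core inverse of a
   iff axa = a, xax = x, (ax)^* = ax, xa^2 = a and ax^2 = x.  The hypotheses
   ab = 0 and a^*b = 0 make the core inverses p of a and q of b annihilate each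
   other and the other element (pb = qa = aq = pq = qp = 0).  For
   y = (1 - qb)p + q one then gets (a + b)y = ap + bq, a sum of hermitian
   elements that fixes p and q on both sides, and the five equations for the
   pair (a + b, y) follow. *)

From mathcomp Require Import all_boot all_algebra.
Import GRing.Theory.
Local Open Scope ring_scope.

Set Implicit Arguments.
Unset Strict Implicit.
Unset Printing Implicit Defensive.

Lemma involution_star0 (R : pzRingType) (star : R -> R) :
  involution star -> star 0 = 0.
Proof.
by case=> _ _ sD; apply: (@addrI _ (star 0)); rewrite -sD !addr0.
Qed.

Lemma core_inverseP (R : pzRingType) (star : R -> R) (a x : R) :
  involution star ->
  is_core_inverse star a x <->
  [/\ a * x * a = a, x * a * x = x, star (a * x) = a * x,
      x * a * a = a & a * x * x = x].
Proof.
move=> [s2 sM _]; split.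
- move=> [axa [[u xu] [v av]] [[w xw] _]].
  have x_ax : x = x * star (a * x).
    by rewrite {1}xw -{1}axa sM mulrA -xw.
  have herm : star (a * x) = a * x.
    have ax_ax : a * x = a * x * star (a * x) by rewrite -mulrA -x_ax.
    by rewrite {1}ax_ax sM s2 -ax_ax.
  have xax : x * a * x = x by rewrite -mulrA -herm -x_ax.
  split=> //; first by rewrite {2}av mulrA xax -av.
  by rewrite {2}xu mulrA axa -xu.
- move=> [axa xax herm xaa axx]; split=> //.
    by split; [exists (x * x) | exists (a * a)]; rewrite mulrA.
  split; first by exists (x * star x); rewrite -mulrA -sM herm mulrA.
  by exists (star a * a); rewrite -mulrA -{1}herm -sM axa.
Qed.

Section Annihilators.

Variables (R : pzRingType) (star : R -> R) (a x c : R).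
Hypotheses (inv : involution star) (ax : is_core_inverse star a x).

Lemma core_inverse_mull0 : c * a = 0 -> c * x = 0.
Proof.
have [_ _ _ _ axx] := (core_inverseP a x inv).1 ax.
by move=> ca0; rewrite -axx !mulrA ca0 !mul0r.
Qed.

Lemma core_inverse_mulr0 : star a * c = 0 -> x * c = 0.
Proof.
have [_ xax herm _ _] := (core_inverseP a x inv).1 ax.
have [_ sM _] := inv.
move=> ac0; rewrite -xax -[x * a * x]mulrA -herm sM mulrA.
by rewrite -[_ * star a * c]mulrA ac0 mulr0.
Qed.

End Annihilators.

Section CoreInverseSum.

Variables (R : pzRingType) (star : R -> R) (a b p q : R).
Hypotheses (inv : involution star)
  (ap : is_core_inverse star a p) (bq : is_core_inverse star b q)
  (ab0 : a * b = 0) (a'b0 : star a * b = 0).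

Lemma core_inverses_orthogonal :
  [/\ p * b = 0, q * a = 0, a * q = 0, p * q = 0 & q * p = 0].
Proof.
have pb0 : p * b = 0 := core_inverse_mulr0 inv ap a'b0.
have b'a0 : star b * a = 0.
  by have [s2 sM _] := inv; rewrite -(s2 a) -sM a'b0 (involution_star0 inv).
have qa0 : q * a = 0 := core_inverse_mulr0 inv bq b'a0.
split=> //.
- exact: core_inverse_mull0 inv bq ab0.
- exact: core_inverse_mull0 inv bq pb0.
- exact: core_inverse_mull0 inv ap qa0.
Qed.

Lemma core_inverse_add : is_core_inverse star (a + b) ((1 - q * b) * p + q).
Proof.
have [apa pap herm_a paa app] := (core_inverseP a p inv).1 ap.
have [bqb qbq herm_b qbb bqq] := (core_inverseP b q inv).1 bq.
have [pb0 qa0 aq0 pq0 qp0] := core_inverses_orthogonal.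
set y := _ + q; set e := a * p + b * q.
have sy : (a + b) * y = e.
  rewrite mulrDl !mulrDr mulrBl mul1r !mulrBr !mulrA aq0 bqb !mul0r subr0 addr0.
  by rewrite subrr add0r.
have e_p : e * p = p by rewrite mulrDl -!mulrA qp0 mulr0 addr0 mulrA app.
have e_q : e * q = q by rewrite mulrDl -!mulrA pq0 mulr0 add0r mulrA bqq.
have p_e : p * e = p by rewrite mulrDr !mulrA pap pb0 mul0r addr0.
have q_e : q * e = q by rewrite mulrDr !mulrA qbq qa0 mul0r add0r.
apply/(core_inverseP _ _ inv); split.
- rewrite sy mulrDl !mulrDr -!mulrA pb0 qa0 !mulr0 addr0 add0r !mulrA.
  by rewrite apa bqb.
- by rewrite -mulrA sy mulrDl -mulrA p_e q_e.
- by have [_ _ sD] := inv; rewrite sy sD herm_a herm_b.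
- have ps : p * (a + b) = p * a by rewrite mulrDr pb0 addr0.
  have qs : q * (a + b) = q * b by rewrite mulrDr qa0 add0r.
  have pas : p * a * (a + b) = a by rewrite mulrDr paa -mulrA ab0 mulr0 addr0.
  have qbs : q * b * (a + b) = q * b * a + b by rewrite mulrDr qbb.
  rewrite mulrDl -mulrA ps qs mulrDl -[(1 - q * b) * _ * _]mulrA pas qbs.
  by rewrite mulrBl mul1r addrA subrK.
- rewrite sy mulrDr e_q mulrA mulrBr mulr1 mulrA e_q mulrBl e_p.
  by rewrite /y mulrBl mul1r.
Qed.

End CoreInverseSum.

Theorem theorem4p3 (R : pzRingType) (star : R -> R) (a b ac bc : R) :
  involution star ->
  is_core_inverse star a ac ->
  is_core_inverse star b bc ->
  a * b = 0 -> star a * b = 0 ->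
  core_invertible star (a + b) /\
  is_core_inverse star (a + b) ((1 - bc * b) * ac + bc).
Proof.
move=> inv ca cb ab a_b.
have core_sum := core_inverse_add inv ca cb ab a_b.
by split=> //; exists ((1 - bc * b) * ac + bc).
Qed.
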